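(* Let a regular network with adjacency matrix $A$ be given and let $\mathcal{L}$ be the lattice of all its synchrony subspaces. Every join-irreducible element $S$ of $\mathcal{L}$ is the smallest synchrony subspace containing some special Jordan subspace to the network. Consequently, the cardinality of the set of join-irreducible elements of $\mathcal{L}$ does not exceed the cardinality of the set of special Jordan subspaces to the network.
   Context: A regular network is a finite directed graph on cells $1,\dots,n$ (loops and multiple arrows allowed) in which every cell receives the same number $v$ of arrows (the valency). Its adjacency matrix $A=[a_{ij}]$ has $a_{ij}$ equal to the number of arrows cell $i$ receives from cell $j$; every row sum is $v$. $A$ acts on $\mathbb{C}^n$. A polydiagonal is a subspace of $\mathbb{C}^n$ of the form $\{x : x_i=x_j \text{ for all } (i,j)\in R\}$ for some (possibly empty) set $R$ of index pairs. A synchrony subspace is a polydiagonal invariant under $A$. The synchrony subspaces, ordered by inclusion, form a complete lattice $\mathcal{L}$: the meet is intersection and the join of $S_1,S_2$ is the smallest synchrony subspace containing $S_1+S_2$. An element $S\in\mathcal{L}$ is join-irreducible if it cannot be written as the join of two elements of $\mathcal{L}$ both different from $S$. $F=\{x_1=\cdots=x_n\}$ is the fully synchrony subspace. $P(W)$ is the smallest polydiagonal containing a subspace $W$. For an eigenvalue $\lambda$ of $A$, the generalized eigenspace is $G_\lambda=\operatorname{Ker}(A-\lambda I)^p$ for $p$ large. A Jordan chain of length $k$ for $\lambda$ is a sequence of nonzero vectors $x_1,\dots,x_k$ with $(A-\lambda I)x_1=0$ and $(A-\lambda I)x_i=x_{i-1}$ for $2\le i\le k$; a Jordan subspace is the span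 of a Jordan chain. A Jordan subspace $W$ of a generalized eigenspace $G$ is a special Jordan subspace to the network if for every Jordan subspace $U$ of $G$ with $\dim U=\dim W$ and $P(U)\subseteq P(W)$, either $P(U)=P(W)$ or $U=F$. *)

(* Vectors of C^n are represented as row vectors 'rV[algC]_n,
   subspaces as row spaces of square matrices 'M[algC]_n (mxalgebra, %MS).
   The column action x |-> A x corresponds to r |-> r *m A^T on rows. *)
From HB Require Import structures.
From mathcomp Require Import all_boot all_order all_algebra all_field.
Set Implicit Arguments. Unset Strict Implicit. Unset Printing Implicit Defensive.
Import Order.TTheory GRing.Theory Num.Theory.
Local Open Scope ring_scope.

Section Net.
Variables (n : nat) (a : 'M[nat]_n).

(* adjacency matrix over C: a i j = number of arrows cell i receives from j *)
Definition adjC : 'M[algC]_n := map_mx (fun k : nat => k%:R) a.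

Definition actA : 'M[algC]_n := (adjC)^T.

Definition Fsub : 'M[algC]_n := <<(const_mx 1 : 'rV[algC]_n)>>%MS.

Definition is_polydiag (V : 'M[algC]_n) : Prop :=
  exists R : rel 'I_n, forall x : 'rV[algC]_n,
    (x <= V)%MS <-> (forall i j, R i j -> x 0 i = x 0 j).

Definition is_sync (V : 'M[algC]_n) : Prop :=
  is_polydiag V /\ (V *m actA <= V)%MS.

Definition smallest_sync (V S : 'M[algC]_n) : Prop :=
  [/\ is_sync S, (V <= S)%MS &
      forall T : 'M[algC]_n, is_sync T -> (V <= T)%MS -> (S <= T)%MS].

Definition is_P (W D : 'M[algC]_n) : Prop :=
  [/\ is_polydiag D, (W <= D)%MS &
      forall D' : 'M[algC]_n, is_polydiag D' -> (W <= D')%MS -> (D <= D')%MS].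

Definition join_irreducible (S : 'M[algC]_n) : Prop :=
  is_sync S /\
  ~ (exists S1 S2 : 'M[algC]_n,
       [/\ is_sync S1, is_sync S2, ~~ (S1 == S)%MS, ~~ (S2 == S)%MS &
           smallest_sync (S1 + S2)%MS S]).

Definition jordan_chain (lam : algC) (k : nat) (x : nat -> 'rV[algC]_n) : Prop :=
  [/\ (0 < k)%N,
      forall i, (i < k)%N -> x i != 0,
      x 0 *m (actA - lam%:M) = 0 &
      forall i, (0 < i < k)%N -> x i *m (actA - lam%:M) = x i.-1].

Definition jordan_sub (lam : algC) (W : 'M[algC]_n) : Prop :=
  exists (k : nat) (x : nat -> 'rV[algC]_n),
    jordan_chain lam k x /\ (W == \sum_(i < k) <<x i>>)%MS.

Definition special_jordan (W : 'M[algC]_n) : Prop :=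
  exists lam : algC, jordan_sub lam W /\
    forall U : 'M[algC]_n, jordan_sub lam U -> \rank U = \rank W ->
      forall PU PW : 'M[algC]_n, is_P U PU -> is_P W PW -> (PU <= PW)%MS ->
        (PU == PW)%MS \/ (U == Fsub)%MS.

End Net.

(* Let S be join-irreducible.  Splitting S into its generalized eigencomponents
   and using join-irreducibility, S is the smallest synchrony subspace
   containing the Krylov space <y, yA_l, ..., yA_l^(k-1)> of a single vector y
   with yA_l^k = 0, where A_l = A - l I (y is a "generator" of S).  Choose a
   generator with k minimal and, for this l and k, one whose Krylov vectors
   agree on the largest set of coordinate pairs; its Krylov space W is a
   Jordan subspace.  If U is a Jordan subspace of the same dimension with
   P(U) <= P(W), then either U generates S too, and maximality forces
   P(U) = P(W); or it does not, and then y + u generates S for every u in U,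
   which forces the eigenvector at the top of the chain of U to be constant;
   regularity of the network then makes the chain of length 1, i.e. U = F.
   Choosing such a W for each S yields an injection, since S is recovered as
   the closure of W. *)

From HB Require Import structures.
From mathcomp Require Import all_boot all_order all_algebra all_field.
From Stdlib Require Import Classical ClassicalEpsilon.
From mathcomp Require Import zify.
Import Order.TTheory GRing.Theory Num.Theory.
Local Open Scope ring_scope.

Set Implicit Arguments. Unset Strict Implicit. Unset Printing Implicit Defensive.

Definition decide (P : Prop) : bool :=
  if excluded_middle_informative P then true else false.

Lemma decideP (P : Prop) : reflect P (decide P).
Proof. by rewrite /decide; case: excluded_middle_informative => H; constructor. Qed.

Lemma ex_minP (P : nat -> Prop) : (exists k, P k) ->
  exists2 k, P k & forall k', P k' -> (k <= k')%N.
Proof.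
case=> k0 Pk0; have exP : exists k, decide (P k) by exists k0; apply/decideP.
case: (ex_minnP exP) => k /decideP Pk kmin; exists k => // k' /decideP; exact: kmin.
Qed.

Lemma ex_maxP (P : nat -> Prop) (b : nat) : (exists k, P k) ->
  (forall k, P k -> (k <= b)%N) -> exists2 k, P k & forall k', P k' -> (k' <= k)%N.
Proof.
case=> k0 Pk0 Pb; have exP : exists k, decide (P k) by exists k0; apply/decideP.
have ubP k : decide (P k) -> (k <= b)%N by move/decideP; exact: Pb.
case: (ex_maxnP exP ubP) => k /decideP Pk kmax; exists k => // k' /decideP; exact: kmax.
Qed.

Lemma real_argmax (R : numDomainType) (I : finType) (i0 : I) (f : I -> R) :
  (forall i, f i \is Num.real) -> exists j, forall i, f i <= f j.
Proof.
move=> freal.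
suff [j jmax] : exists j, forall i, i \in enum I -> f i <= f j.
  by exists j => i; apply: jmax; rewrite mem_enum.
elim: (enum I) => [|x s [j jmax]]; first by exists i0.
have [fxj|fjx] := orP (real_leVge (freal x) (freal j)).
  by exists j => i; rewrite inE => /predU1P [->|/jmax].
exists x => i; rewrite inE => /predU1P [->//|/jmax fij]; exact: le_trans fij fjx.
Qed.

Section Coordinates.
Variables (F : fieldType) (n : nat).

Definition coord_eq (V : 'M[F]_n) (i j : 'I_n) : Prop :=
  forall x : 'rV[F]_n, (x <= V)%MS -> x 0 i = x 0 j.

Lemma coord_eqS (U V : 'M[F]_n) i j : (U <= V)%MS -> coord_eq V i j -> coord_eq U i j.
Proof. by move=> UV Vij x xU; apply: Vij; exact: submx_trans xU UV. Qed.

End Coordinates.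

Section Krylov.
Variables (F : fieldType) (n : nat) (N : 'M[F]_n).
Implicit Types (x y u : 'rV[F]_n) (k m : nat).

Definition krylov y k : 'M[F]_(k, n) := \matrix_(i < k) (y *m N ^+ i).
Definition cyc y k : 'M[F]_n := <<krylov y k>>%MS.

Definition jvec y k : Prop := [/\ (0 < k)%N, y *m N ^+ k = 0 & y *m N ^+ k.-1 != 0].

Lemma mulmxXD y p q : y *m N ^+ (p + q) = y *m N ^+ p *m N ^+ q.
Proof. by rewrite exprD mulmxA. Qed.

Lemma mulmxXS y p : y *m N ^+ p *m N = y *m N ^+ p.+1.
Proof. by rewrite exprSr mulmxA. Qed.

Lemma mulmxX_high y k m : y *m N ^+ k = 0 -> (k <= m)%N -> y *m N ^+ m = 0.
Proof. by move=> yk km; rewrite -(subnKC km) mulmxXD yk mul0mx. Qed.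

Lemma cyc_memP y k x :
  reflect (exists c : 'rV[F]_k, x = c *m krylov y k) (x <= cyc y k)%MS.
Proof. by rewrite genmxE; apply: submxP. Qed.

Lemma cyc_gen y k m : (m < k)%N -> (y *m N ^+ m <= cyc y k)%MS.
Proof. by move=> mk; rewrite genmxE; apply: (eq_row_sub (Ordinal mk)); rewrite rowK. Qed.

Lemma cyc_self y k : (0 < k)%N -> (y <= cyc y k)%MS.
Proof. by move=> k0; have := cyc_gen y k0; rewrite expr0 mulmx1. Qed.

Lemma cyc_subP y k m0 (X : 'M[F]_(m0, n)) :
  reflect (forall m, (m < k)%N -> (y *m N ^+ m <= X)%MS) (cyc y k <= X)%MS.
Proof.
rewrite genmxE; apply: (iffP row_subP) => H.
  by move=> m mk; have := H (Ordinal mk); rewrite rowK.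
by move=> i; rewrite rowK; apply: H.
Qed.

Lemma krylov_combX y k (c : 'rV[F]_k) m :
  c *m krylov y k *m N ^+ m = \sum_(p < k) c 0 p *: (y *m N ^+ (p + m)).
Proof.
rewrite (mulmx_sum_row c) mulmx_suml; apply: eq_bigr => p _.
by rewrite rowK -scalemxAl -mulmxXD.
Qed.

Lemma cyc_annihilated y k x : y *m N ^+ k = 0 -> (x <= cyc y k)%MS -> x *m N ^+ k = 0.
Proof.
move=> yk /cyc_memP [c ->]; rewrite krylov_combX big1 // => p _.
by rewrite (mulmxX_high yk) ?scaler0 // leq_addl.
Qed.

Lemma cyc_stableX y k x m : y *m N ^+ k = 0 ->
  (x <= cyc y k)%MS -> (x *m N ^+ m <= cyc y k)%MS.
Proof.
move=> yk /cyc_memP [c ->]; rewrite krylov_combX; apply: summx_sub => p _.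
apply: scalemx_sub; have [lt|ge] := ltnP (p + m) k; first exact: cyc_gen.
by rewrite (mulmxX_high yk ge) sub0mx.
Qed.

Lemma cyc_sub_cyc y k x : y *m N ^+ k = 0 ->
  (x <= cyc y k)%MS -> (cyc x k <= cyc y k)%MS.
Proof. by move=> yk xy; apply/cyc_subP => m _; exact: cyc_stableX. Qed.

Lemma cyc_add y u k : (cyc (y + u) k <= cyc y k + cyc u k)%MS.
Proof. by apply/cyc_subP => m mk; rewrite mulmxDl addmx_sub_adds ?cyc_gen. Qed.

Lemma cyc_sub_add y u k : (cyc y k <= cyc (y + u) k + cyc u k)%MS.
Proof.
apply/cyc_subP => m mk.
have -> : y *m N ^+ m = (y + u) *m N ^+ m - u *m N ^+ m by rewrite -mulmxBl addrK.
by rewrite addmx_sub_adds ?eqmx_opp ?cyc_gen.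
Qed.

Lemma cyc_succ_eq y k : y *m N ^+ k = 0 -> (cyc y k.+1 :=: cyc y k)%MS.
Proof.
move=> yk; apply/eqmxP/andP; split; apply/cyc_subP => m mk; last first.
  by apply: cyc_gen; apply: leqW.
move: mk; rewrite ltnS leq_eqVlt => /predU1P [->|mk]; last exact: cyc_gen.
by rewrite yk sub0mx.
Qed.

Lemma cyc_chainE y k (x : nat -> 'rV[F]_n) :
  (forall i, (i < k)%N -> x i = y *m N ^+ (k.-1 - i)) ->
  (cyc y k :=: \sum_(i < k) <<x i>>)%MS.
Proof.
move=> xE; apply/eqmxP/andP; split.
  apply/cyc_subP => m mk; have mk' : (k.-1 - m < k)%N by lia.
  apply: (sumsmx_sup (Ordinal mk')) => //; rewrite genmxE xE //=.
  by have -> : (k.-1 - (k.-1 - m) = m)%N by lia.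
apply/sumsmx_subP => i _; rewrite genmxE xE //; apply: cyc_gen.
by have := ltn_ord i; lia.
Qed.

Lemma first_nonzero k (c : 'rV[F]_k) : c != 0 ->
  exists i0 : 'I_k, c 0 i0 != 0 /\ forall i : 'I_k, (i < i0)%N -> c 0 i = 0.
Proof.
move=> cnz; have [i1 ci1] : exists i1, c 0 i1 != 0.
  apply/existsP; apply: contraNT cnz => /existsPn c0; apply/eqP/rowP => i.
  by rewrite mxE; apply/eqP/negbNE/c0.
case: (@arg_minnP _ i1 (fun i => c 0 i != 0) val ci1) => i0 ci0 i0min.
exists i0; split => // i lt; apply/eqP; apply: contraTT lt => ci.
by rewrite -leqNgt; apply: i0min.
Qed.

Lemma krylov_lowest y k (c : 'rV[F]_k) (i0 : 'I_k) : y *m N ^+ k = 0 ->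
  (forall i : 'I_k, (i < i0)%N -> c 0 i = 0) ->
  c *m krylov y k *m N ^+ (k.-1 - i0) = c 0 i0 *: (y *m N ^+ k.-1).
Proof.
move=> yk low; rewrite krylov_combX (bigD1 i0) //=.
have -> : (i0 + (k.-1 - i0) = k.-1)%N by have := ltn_ord i0; lia.
rewrite big1 ?addr0 // => i ne.
have [lt|ge] := ltnP i i0; first by rewrite low // scale0r.
have lt : (i0 < i)%N by rewrite ltn_neqAle ge andbT eq_sym.
by rewrite (mulmxX_high yk) ?scaler0 //; have := ltn_ord i; lia.
Qed.

Lemma krylov_free y k : jvec y k -> row_free (krylov y k).
Proof.
case=> _ yk ytop; rewrite -kermx_eq0; apply/rowV0P => c /sub_kermxP cK.
apply/eqP; apply: contraTT ytop => cnz; have [i0 [ci0 low]] := first_nonzero cnz.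
have := krylov_lowest yk low; rewrite cK mul0mx => /esym/eqP.
by rewrite scaler_eq0 (negPf ci0) /= => ->.
Qed.

Lemma rank_cyc y k : jvec y k -> \rank (cyc y k) = k.
Proof. by move=> jy; rewrite genmxE; apply/eqP/krylov_free. Qed.

Definition agree y k : {set 'I_n * 'I_n} :=
  [set p | [forall m : 'I_k, (y *m N ^+ m) 0 p.1 == (y *m N ^+ m) 0 p.2]].

Lemma agreeP y k i j : reflect
  (forall m, (m < k)%N -> (y *m N ^+ m) 0 i = (y *m N ^+ m) 0 j) ((i, j) \in agree y k).
Proof.
rewrite inE; apply: (iffP forallP) => H m; last exact/eqP/H.
by move=> mk; apply/eqP/(H (Ordinal mk)).
Qed.

Lemma coord_eq_cyc y k i j : coord_eq (cyc y k) i j <-> (i, j) \in agree y k.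
Proof.
split=> [Hij|/agreeP Hij x /cyc_memP [c ->]].
  by apply/agreeP => m mk; apply: Hij; apply: cyc_gen.
have sE (s : F) (w : 'rV[F]_n) p : (s *: w) 0 p = s * w 0 p by rewrite mxE.
rewrite (mulmx_sum_row c) !summxE; apply: eq_bigr => m _.
by rewrite !sE !rowK Hij.
Qed.

Lemma agree_add y y' u k : y' *m N ^+ k = 0 -> (u <= cyc y' k)%MS ->
  agree y k \subset agree y' k -> agree y k \subset agree (y + u) k.
Proof.
move=> y'k uy' yy'; apply/subsetP => -[i j] yij.
have /coord_eq_cyc y'ij := subsetP yy' _ yij.
apply/agreeP => m mk; rewrite mulmxDl [LHS]mxE [RHS]mxE (agreeP _ _ _ _ yij m mk).
by rewrite (y'ij _ (cyc_stableX m y'k uy')).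
Qed.

Lemma solve_gaps y k (i j : 'I_n) : jvec y k ->
  (y *m N ^+ k.-1) 0 i != (y *m N ^+ k.-1) 0 j ->
  forall s : 'rV[F]_k, exists c : 'rV[F]_k, forall m : 'I_k,
    (c *m krylov y k *m N ^+ m) 0 i - (c *m krylov y k *m N ^+ m) 0 j = s 0 m.
Proof.
case=> k0 yk _ ytop s.
have sE (r : F) (w : 'rV[F]_n) p : (r *: w) 0 p = r * w 0 p by rewrite mxE.
pose gap p := (y *m N ^+ p) 0 i - (y *m N ^+ p) 0 j.
pose Phi : 'M[F]_k := \matrix_(p, m) gap (p + m)%N.
have PhiE (c : 'rV[F]_k) (m : 'I_k) : (c *m Phi) 0 m =
    (c *m krylov y k *m N ^+ m) 0 i - (c *m krylov y k *m N ^+ m) 0 j.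
  rewrite krylov_combX !summxE -sumrB [LHS]mxE; apply: eq_bigr => p _.
  by rewrite !sE [Phi _ _]mxE mulrBr.
have Phi_unit : Phi \in unitmx.
  rewrite -row_free_unit -kermx_eq0; apply/rowV0P => c /sub_kermxP cPhi.
  apply/eqP; apply: contraTT ytop => cnz; have [i0 [ci0 low]] := first_nonzero cnz.
  have mk : (k.-1 - i0 < k)%N by lia.
  have := PhiE c (Ordinal mk); rewrite cPhi [LHS]mxE /= (krylov_lowest yk low).
  by rewrite !sE -mulrBr => /esym/eqP; rewrite mulf_eq0 (negPf ci0) subr_eq0 /= => ->.
by exists (s *m invmx Phi) => m; rewrite -PhiE mulmxKV.
Qed.

Lemma top_coord_const y y' k : jvec y' k ->
  agree y k \subset agree y' k ->
  (forall c : 'rV[F]_k, agree (y + c *m krylov y' k) k \subset agree y k) ->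
  forall i j, (y' *m N ^+ k.-1) 0 i = (y' *m N ^+ k.-1) 0 j.
Proof.
move=> jy' yy' rigid i j; apply/eqP; apply: contraT => ne.
have [c cE] := solve_gaps jy' ne (\row_m - ((y *m N ^+ m) 0 i - (y *m N ^+ m) 0 j)).
have : (i, j) \in agree (y + c *m krylov y' k) k.
  apply/agreeP => m mk; have := cE (Ordinal mk); rewrite [RHS]mxE /= => cEm.
  apply/eqP; rewrite mulmxDl -subr_eq0 [_ 0 i]mxE [_ 0 j]mxE opprD addrACA cEm.
  by rewrite subrr.
move=> /(subsetP (rigid c)) /(subsetP yy') /agreeP.
by case: jy' => k0 _ _ /(_ k.-1); rewrite ltn_predL => /(_ k0) /eqP; rewrite (negPf ne).
Qed.

End Krylov.

Section Polydiagonals.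
Variable n : nat.
Implicit Types (U W D T : 'M[algC]_n) (x : 'rV[algC]_n).

(* Column j of rel_diff R i is e_i - e_j when R i j holds (and 0 otherwise),
   so that x *m rel_diff R i records the differences x_i - x_j. *)
Definition rel_diff (R : rel 'I_n) (i : 'I_n) : 'M[algC]_n :=
  \matrix_(l, j) (if R i j then (l == i)%:R - (l == j)%:R else 0).

Definition polydiag_mx (R : rel 'I_n) : 'M[algC]_n :=
  (\bigcap_(i : 'I_n) kermx (rel_diff R i))%MS.

Lemma rel_diff_row R i x j :
  (x *m rel_diff R i) 0 j = if R i j then x 0 i - x 0 j else 0.
Proof.
have delta l0 : \sum_l x 0 l * (l == l0)%:R = x 0 l0.
  by rewrite (bigD1 l0) //= eqxx mulr1 big1 ?addr0 // => l /negPf ->; rewrite mulr0.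
rewrite mxE; under eq_bigr => l _ do rewrite mxE.
case: (R i j); last by rewrite big1 // => l _; rewrite mulr0.
by under eq_bigr => l _ do rewrite mulrBr; rewrite sumrB !delta.
Qed.

Lemma polydiag_mxP R x :
  (x <= polydiag_mx R)%MS <-> (forall i j, R i j -> x 0 i = x 0 j).
Proof.
split=> [/sub_bigcapmxP xR i j Rij | xR].
  have /sub_kermxP/rowP/(_ j) := xR i isT.
  by rewrite rel_diff_row Rij mxE => /eqP; rewrite subr_eq0 => /eqP.
apply/sub_bigcapmxP => i _; apply/sub_kermxP/rowP => j.
by rewrite rel_diff_row mxE; case: ifP => // /xR ->; rewrite subrr.
Qed.

Lemma polydiag_of_rel (R : 'I_n -> 'I_n -> Prop) : exists D,
  is_polydiag D /\ forall x, (x <= D)%MS <-> (forall i j, R i j -> x 0 i = x 0 j).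
Proof.
pose Rb i j := decide (R i j).
have RbP x : (forall i j, Rb i j -> x 0 i = x 0 j) <-> (forall i j, R i j -> x 0 i = x 0 j).
  by split=> xR i j Rij; apply: xR; apply/decideP.
exists (polydiag_mx Rb); split; first by exists Rb => x; exact: polydiag_mxP.
by move=> x; rewrite polydiag_mxP.
Qed.

Lemma polydiagP T : is_polydiag T ->
  forall x, (x <= T)%MS <-> (forall i j, coord_eq T i j -> x 0 i = x 0 j).
Proof.
case=> R TR x; split=> [xT i j Tij | xT]; first exact: Tij.
by apply/TR => i j Rij; apply: xT => y /TR; apply.
Qed.

Lemma polydiag_const T : is_polydiag T -> ((const_mx 1 : 'rV[algC]_n) <= T)%MS.
Proof. by case=> R TR; apply/TR => i j _; rewrite !mxE. Qed.

Lemma is_PP W D : is_P W D ->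
  forall x, (x <= D)%MS <-> (forall i j, coord_eq W i j -> x 0 i = x 0 j).
Proof.
case=> [[R DR] WD Dmin] x; split=> [xD i j Wij | xW].
  have [E [pE EW]] := polydiag_of_rel (coord_eq W).
  have DE : (D <= E)%MS.
    by apply: Dmin pE _; apply/row_subP => r; apply/EW => i' j'; apply; apply: row_sub.
  exact: (EW x).1 (submx_trans xD DE) i j Wij.
by apply/DR => i j Rij; apply: xW => y yW; move/(submx_trans yW)/DR: WD; apply.
Qed.

Lemma is_P_sub U W PU PW : is_P U PU -> is_P W PW ->
  (PW <= PU)%MS <-> (forall i j, coord_eq U i j -> coord_eq W i j).
Proof.
move=> HU HW; split=> [PWU i j Uij x xW | UW].
  apply: (is_PP HU x).1 i j Uij; apply: submx_trans PWU.
  by case: HW => _ WPW _; apply: submx_trans WPW.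
apply/row_subP => r; apply/(is_PP HU) => i j /UW; apply: (is_PP HW _).1.
exact: row_sub.
Qed.

End Polydiagonals.

Section Synchrony.
Variables (n : nat) (a : 'M[nat]_n).
Implicit Types (V U S : 'M[algC]_n).

Lemma sync_stable S (x : 'rV[algC]_n) :
  is_sync a S -> (x <= S)%MS -> (x *m actA a <= S)%MS.
Proof. by case=> _ SA xS; apply: submx_trans SA; apply: submxMr. Qed.

Lemma sync_stableX S (l : algC) m (x : 'rV[algC]_n) :
  is_sync a S -> (x <= S)%MS -> (x *m (actA a - l%:M) ^+ m <= S)%MS.
Proof.
move=> sS; elim: m x => [|m IH] x xS; first by rewrite expr0 mulmx1.
rewrite exprS mulmxA; apply: IH; rewrite mulmxBr mul_mx_scalar.
by rewrite addmx_sub ?eqmx_opp ?scalemx_sub ?sync_stable.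
Qed.

(* Every subspace has a smallest synchrony subspace containing it: the
   polydiagonal of the agreements common to all synchrony subspaces above V. *)
Lemma sync_closure V : exists S, smallest_sync a V S.
Proof.
pose R i j := exists T, [/\ is_sync a T, (V <= T)%MS & coord_eq T i j].
have [D [pD DR]] := polydiag_of_rel R.
have Dmin T : is_sync a T -> (V <= T)%MS -> (D <= T)%MS.
  move=> sT VT; apply/row_subP => r; apply/(polydiagP sT.1) => i j Tij.
  by apply: ((DR (row r D)).1 (row_sub r D) i j); exists T.
exists D; split=> //; last first.
  apply/row_subP => r; apply/DR => i j [T [_ VT]]; apply.
  exact: submx_trans (row_sub r V) VT.
split=> //; apply/row_subP => r; rewrite row_mul; apply/DR => i j [T [sT VT]]; apply.
exact: sync_stable (submx_trans (row_sub r D) (Dmin T sT VT)).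
Qed.

Lemma smallest_sync_sandwich V U S : smallest_sync a V S ->
  (V <= U)%MS -> (U <= S)%MS -> smallest_sync a U S.
Proof.
move=> [sS _ Smin] VU US; split=> // T sT UT; apply: Smin sT _.
exact: submx_trans VU UT.
Qed.

Lemma smallest_sync_eqmx V S S' : is_sync a S' -> (S == S')%MS ->
  smallest_sync a V S -> smallest_sync a V S'.
Proof.
move=> sS' /andP [SS' S'S] [sS VS Smin]; split=> //; first exact: submx_trans VS SS'.
by move=> T sT VT; apply: submx_trans S'S _; apply: Smin.
Qed.

Lemma smallest_sync_unique V1 V2 S1 S2 : (V1 == V2)%MS ->
  smallest_sync a V1 S1 -> smallest_sync a V2 S2 -> (S1 == S2)%MS.
Proof.
move=> /andP [V12 V21] [s1 V1S1 m1] [s2 V2S2 m2]; apply/andP; split.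
  by apply: m1 s2 _; apply: submx_trans V2S2.
by apply: m2 s1 _; apply: submx_trans V1S1.
Qed.

Lemma join_irreducible_split S V1 V2 : join_irreducible a S ->
  smallest_sync a (V1 + V2)%MS S -> smallest_sync a V1 S \/ smallest_sync a V2 S.
Proof.
move=> [_ irr] [sS VS Smin].
have [S1 [s1 V1S1 m1]] := sync_closure V1.
have [S2 [s2 V2S2 m2]] := sync_closure V2.
have S1S : (S1 <= S)%MS by apply: m1 sS (submx_trans (addsmxSl _ _) VS).
have S2S : (S2 <= S)%MS by apply: m2 sS (submx_trans (addsmxSr _ _) VS).
have [e1|ne1] := boolP (S1 == S)%MS; first by left; apply: smallest_sync_eqmx e1 _.
have [e2|ne2] := boolP (S2 == S)%MS; first by right; apply: smallest_sync_eqmx e2 _.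
exfalso; apply: irr; exists S1, S2; split=> //; split=> //; first by rewrite addsmx_sub S1S.
by move=> T sT S12T; apply: Smin sT (submx_trans (addsmxS V1S1 V2S2) S12T).
Qed.

Lemma join_irreducible_sum S (I : Type) (s : seq I) (V_ : I -> 'M[algC]_n) :
  join_irreducible a S -> smallest_sync a (\sum_(i <- s) V_ i)%MS S ->
  (exists i, smallest_sync a (V_ i) S) \/ smallest_sync a 0 S.
Proof.
move=> JI; elim: s => [|i s IH]; first by rewrite big_nil; right.
rewrite big_cons => /(join_irreducible_split JI) [ssi|/IH //]; by left; exists i.
Qed.

End Synchrony.

(* In a regular network of valency v the constant vector is an eigenvector for
   v, and v admits no Jordan chain of length 2 ending at the constant vector:
   at a cell where Re(w/c) is maximal the defining equation forces 1 <= 0. *)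
Section Regular.
Variables (n v : nat) (a : 'M[nat]_n).
Hypothesis n_gt0 : (0 < n)%N.
Hypothesis Hreg : forall i : 'I_n, (\sum_(j < n) a i j)%N = v.
Local Notation one := (const_mx 1 : 'rV[algC]_n).

Lemma actA_const : one *m actA a = v%:R *: one.
Proof.
apply/rowP => j; rewrite !mxE.
under eq_bigr => i _ do rewrite !mxE mul1r.
by rewrite -natr_sum Hreg mulr1.
Qed.

Lemma no_jordan_const (w : 'rV[algC]_n) (c : algC) :
  w *m (actA a - v%:R%:M) = c *: one -> c = 0.
Proof.
move=> wc; apply/eqP; apply: contraT => cnz.
pose r j := 'Re (w 0 j / c).
have rowE j : \sum_i (a j i)%:R * r i - v%:R * r j = 1.
  have cE : \sum_i w 0 i * (a j i)%:R - v%:R * w 0 j = c.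
    have := congr1 (fun M : 'rV[algC]_n => M 0 j) wc.
    rewrite /= mulmxBr mul_mx_scalar !mxE mulr1 => <-.
    by congr (_ - _); apply: eq_bigr => i _; rewrite !mxE.
  have := congr1 (fun z => 'Re (z / c)) cE; rewrite /= divff //.
  have -> : 'Re (1 : algC) = 1 by apply/Creal_ReP; exact: real1.
  move=> Re1; rewrite -[RHS]Re1 mulrBl raddfB /= mulr_suml raddf_sum /=.
  congr (_ - _); last by rewrite -mulrA ReMl ?realn.
  by apply: eq_bigr => i _; rewrite mulrAC ReMr ?realn // mulrC.
have [j0 j0max] := real_argmax (Ordinal n_gt0) (fun j => Creal_Re (w 0 j / c)).
have le : \sum_i (a j0 i)%:R * r i <= \sum_i (a j0 i)%:R * r j0.
  by apply: ler_sum => i _; apply: ler_wpM2l => //; apply: j0max.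
rewrite -mulr_suml -natr_sum Hreg -subr_le0 (rowE j0) in le.
by rewrite ler10 in le.
Qed.

End Regular.

Section PrimaryDecomposition.
Variable F : closedFieldType.

Lemma char_poly_split m (g : 'M[F]_m) : exists d (lam : 'I_d -> F) (mu : 'I_d -> nat),
  char_poly g = \prod_(i < d) ('X - (lam i)%:P) ^+ mu i /\
  {in predT &, forall i j, j != i ->
     coprimep (('X - (lam i)%:P) ^+ mu i) (('X - (lam j)%:P) ^+ mu j)}.
Proof.
have [rs rsE] := closed_field_poly_normal (char_poly g).
rewrite (monicP (char_poly_monic g)) scale1r in rsE.
pose ds := undup rs.
exists (size ds), (fun i => nth 0 ds i), (fun i => count_mem (nth 0 ds i) rs); split.
  by rewrite rsE -big_undup_iterop_count (big_nth 0) big_mkord.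
move=> i j _ _ ji; rewrite coprimep_expl // coprimep_expr // coprimep_XsubC root_XsubC.
by rewrite nth_uniq ?undup_uniq // eq_sym.
Qed.

Lemma kermxpoly_char m (g : 'M[F]_m) : (1%:M <= kermxpoly g (char_poly g))%MS.
Proof.
case: m g => [|m] g; first by rewrite thinmx0 sub0mx.
by rewrite (kermxpoly_min (mxminpoly_dvd_char g)).
Qed.

Lemma kermxpoly_XsubC_exp n m0 (M : 'M[F]_n) (X : 'M[F]_(m0, n)) l m :
  (X <= kermxpoly M (('X - l%:P) ^+ m))%MS -> X *m (M - l%:M) ^+ m = 0.
Proof.
case: n M X => [|n] M X; first by move=> _; apply/matrixP => ? -[].
by rewrite /kermxpoly rmorphXn /= rmorphB /= horner_mx_X horner_mx_C => /sub_kermxP.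
Qed.

Lemma primary_decomposition n (M S : 'M[F]_n) : (S *m M <= S)%MS ->
  exists d (lam : 'I_d -> F) (mu : 'I_d -> nat),
    (S <= \sum_(i < d) (S :&: kermx ((M - (lam i)%:M) ^+ mu i)))%MS.
Proof.
move=> SM; pose V := row_base S; pose g := conjmx V M.
have sV : stablemx V M by rewrite stablemx_row_base.
have [d [lam [mu [gE cop]]]] := char_poly_split g.
exists d, lam, mu; apply: submx_trans (_ : S <= V)%MS _; first by rewrite eq_row_base.
have := kermxpoly_char g; rewrite gE kermxpoly_prod // => /sub_sumsmxP [u uE].
rewrite -[V]mul1mx uE mulmx_suml; apply: summx_sub_sums => i _; rewrite sub_capmx.
apply/andP; split; first by apply: submx_trans (submxMl _ V) _; rewrite eq_row_base.
apply/sub_kermxP/kermxpoly_XsubC_exp.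
by rewrite -sub_kermxpoly_conjmx ?row_base_free ?submxMl.
Qed.

End PrimaryDecomposition.

Section Network.
Variables (n v : nat) (a : 'M[nat]_n).
Hypothesis n_gt0 : (0 < n)%N.
Hypothesis Hreg : forall i : 'I_n, (\sum_(j < n) a i j)%N = v.
Local Notation one := (const_mx 1 : 'rV[algC]_n).
Implicit Types (S U : 'M[algC]_n) (y u : 'rV[algC]_n) (l : algC) (k : nat).

Definition Al l : 'M[algC]_n := actA a - l%:M.

(* Jordan subspaces for l are exactly the Krylov spaces of vectors of exact
   height k under A_l (the chain read backwards). *)
Lemma cyc_jordan_sub l y k : jvec (Al l) y k -> jordan_sub a l (cyc (Al l) y k).
Proof.
case=> k0 yk ytop; pose x i := y *m Al l ^+ (k.-1 - i).
exists k, x; split; last by apply/eqmxP; apply: cyc_chainE.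
split=> //.
- move=> i ik; apply: contraNneq ytop => xi0.
  have -> : k.-1 = (k.-1 - i + i)%N by lia.
  by rewrite mulmxXD -/(x i) xi0 mul0mx.
- by rewrite /x subn0 mulmxXS prednK.
- by move=> i ik; rewrite /x mulmxXS; congr (_ *m _ ^+ _); lia.
Qed.

Lemma jordan_sub_cyc l U : jordan_sub a l U ->
  exists k y, jvec (Al l) y k /\ (U == cyc (Al l) y k)%MS.
Proof.
case=> k [x [[k0 xnz x0 xS] Ueq]]; pose y := x k.-1.
have xE d : (d <= k.-1)%N -> x (k.-1 - d)%N = y *m Al l ^+ d.
  elim: d => [|d IH] dk; first by rewrite subn0 expr0 mulmx1.
  have j0 : (0 < k.-1 - d < k)%N by lia.
  by rewrite -mulmxXS -(IH (ltnW dk)) (xS _ j0); congr (x _); lia.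
have xiE i : (i < k)%N -> x i = y *m Al l ^+ (k.-1 - i).
  by move=> ik; rewrite -xE ?leq_subr // subKn //; lia.
have ytop : y *m Al l ^+ k.-1 = x 0 by rewrite -xE // subnn.
exists k, y; split.
  by split=> //; rewrite ?ytop ?xnz // -(prednK k0) -mulmxXS ytop.
apply/eqmxP; apply: eqmx_trans (eqmxP Ueq) _; apply: eqmx_sym; exact: cyc_chainE.
Qed.

Definition generator S l k y : Prop :=
  [/\ y *m Al l ^+ k = 0, y != 0 & smallest_sync a (cyc (Al l) y k) S].

Lemma generator_const S : is_sync a S -> smallest_sync a 0 S -> generator S v%:R 1 one.
Proof.
move=> sS [_ _ Smin]; split.
- by rewrite expr1 mulmxBr (actA_const Hreg) mul_mx_scalar subrr.
- by apply/eqP => /rowP/(_ (Ordinal n_gt0))/eqP; rewrite !mxE oner_eq0.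
- split=> //; last by move=> T sT _; apply: Smin sT (sub0mx _ _).
  apply/cyc_subP => m; rewrite ltnS leqn0 => /eqP ->; rewrite expr0 mulmx1.
  exact: polydiag_const sS.1.
Qed.

(* A join-irreducible S is generated by a single vector: split S into its
   generalized eigencomponents and apply join-irreducibility to their rows. *)
Lemma generator_exists S : join_irreducible a S -> exists l k y, generator S l k y.
Proof.
move=> JI; have sS := JI.1.
have [d [lam [mu Sdec]]] := primary_decomposition sS.2.
pose C i := (S :&: kermx (Al (lam i) ^+ mu i))%MS.
pose Y (p : 'I_n * 'I_d) := row p.1 (C p.2).
have YS p : (Y p <= S)%MS by apply: submx_trans (row_sub _ _) (capmxSl _ _).
have Yk p : Y p *m Al (lam p.2) ^+ mu p.2 = 0.
  by apply/sub_kermxP; apply: submx_trans (row_sub _ _) (capmxSr _ _).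
have ssY : smallest_sync a (\sum_p cyc (Al (lam p.2)) (Y p) (mu p.2))%MS S.
  split=> //.
    by apply/sumsmx_subP => p _; apply/cyc_subP => m _; apply: sync_stableX.
  move=> T sT sumT; apply: submx_trans (Sdec : S <= \sum_i C i)%MS _.
  apply/sumsmx_subP => i _; apply/row_subP => r; apply: submx_trans sumT.
  apply: (sumsmx_sup (r, i)) => //=; have := Yk (r, i); rewrite /Y /=.
  case: (mu i) => [|k]; first by rewrite expr0 mulmx1 => ->; rewrite sub0mx.
  by move=> _; apply: cyc_self.
have [[[r i] ssp]|ss0] := join_irreducible_sum JI ssY; last first.
  by exists v%:R, 1%N, one; apply: generator_const.
have [Y0|Ynz] := eqVneq (Y (r, i)) 0; last by exists (lam i), (mu i), (Y (r, i)).
exists v%:R, 1%N, one; apply: generator_const => //.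
apply: (smallest_sync_sandwich (U := 0) ssp); last exact: sub0mx.
by apply/cyc_subP => m _; rewrite /= Y0 mul0mx sub0mx.
Qed.

Lemma generator_height S l k y : generator S l k y ->
  (forall l' k' y', generator S l' k' y' -> (k <= k')%N) -> jvec (Al l) y k.
Proof.
case: k => [|k] [yk ynz ssy] kmin; first by move: ynz; rewrite -yk expr0 mulmx1 eqxx.
split=> //=; apply/eqP => yk1.
have [_ yS _] := ssy; rewrite (cyc_succ_eq yk1) in yS.
have /kmin : generator S l k y.
  by split=> //; apply: (smallest_sync_sandwich ssy); rewrite ?(cyc_succ_eq yk1).
by rewrite ltnn.
Qed.

Lemma generator_perturb S l k y U u : join_irreducible a S -> generator S l k y ->
  (U <= S)%MS -> ~ smallest_sync a U S ->
  u *m Al l ^+ k = 0 -> (cyc (Al l) u k <= U)%MS -> generator S l k (y + u).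
Proof.
move=> JI [yk _ ssy] US nssU uk uU; have [_ yS _] := ssy.
have ssz : smallest_sync a (cyc (Al l) (y + u) k + U)%MS S.
  apply: (smallest_sync_sandwich ssy).
    exact: submx_trans (cyc_sub_add _ _ _ _) (addsmxS (submx_refl _) uU).
  rewrite addsmx_sub US andbT; apply: submx_trans (cyc_add _ _ _ _) _.
  by rewrite addsmx_sub yS (submx_trans uU US).
have [ssz'|//] := join_irreducible_split JI ssz.
split=> //; first by rewrite mulmxDl yk uk addr0.
apply/eqP => z0; apply: nssU; apply: (smallest_sync_sandwich ssz' _ US).
by apply/cyc_subP => m _; rewrite z0 mul0mx sub0mx.
Qed.

(* A Jordan chain whose top (eigen)vector is constant spans F: length >= 2 is
   excluded by the regularity of the network. *)
Lemma const_top_cyc l y k : jvec (Al l) y k ->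
  (forall i j, (y *m Al l ^+ k.-1) 0 i = (y *m Al l ^+ k.-1) 0 j) ->
  (cyc (Al l) y k == Fsub n)%MS.
Proof.
case=> k0 yk ytop const; set i0 := Ordinal n_gt0; set e := y *m Al l ^+ k.-1 in ytop const.
have eE : e = e 0 i0 *: one by apply/rowP => j; rewrite [RHS]mxE [one _ _]mxE mulr1; apply: const.
have e0nz : e 0 i0 != 0 by apply: contraNneq ytop => e0; rewrite eE e0 scale0r.
have [k1|] := ltnP 1 k.
  pose w := y *m Al l ^+ k.-2.
  have wE : w *m Al l = e by rewrite /w /e mulmxXS; congr (_ *m _ ^+ _); lia.
  have eA : e *m Al l = 0 by rewrite /e mulmxXS prednK.
  have oneA : one *m Al l = 0.
    by move: eA; rewrite eE -scalemxAl => /eqP; rewrite scalemx_eq0 (negPf e0nz) => /eqP.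
  have lv : l = v%:R.
    move: oneA; rewrite /Al mulmxBr (actA_const Hreg) mul_mx_scalar -scalerBl.
    by move=> /rowP /(_ i0); rewrite !mxE mulr1 => /eqP; rewrite subr_eq0 => /eqP.
  have := no_jordan_const n_gt0 Hreg (w := w) (c := e 0 i0).
  by rewrite -lv -/(Al l) wE -eE => /(_ erefl) /eqP; rewrite (negPf e0nz).
move=> k1; have k1E : k = 1%N by lia.
subst k; have yE : y = e 0 i0 *: one by rewrite -eE /e expr0 mulmx1.
rewrite /Fsub; apply/andP; split.
  apply/cyc_subP => m; rewrite ltnS leqn0 => /eqP ->.
  by rewrite expr0 mulmx1 yE scalemx_sub // genmxE.
have -> : one = (e 0 i0)^-1 *: y by rewrite yE scalerA mulVf // scale1r.
by rewrite genmxE scalemx_sub // cyc_self.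
Qed.

Lemma optimal_generator_special S l k y : join_irreducible a S -> generator S l k y ->
  (forall l' k' y', generator S l' k' y' -> (k <= k')%N) ->
  (forall y', generator S l k y' ->
     (#|agree (Al l) y' k| <= #|agree (Al l) y k|)%N) ->
  special_jordan a (cyc (Al l) y k).
Proof.
move=> JI gy kmin ymax; have jy := generator_height gy kmin.
have [yk _ ssy] := gy; have [sS WS _] := ssy.
exists l; split; first exact: cyc_jordan_sub.
move=> U jU rkU PU PW HPU HPW PUW.
have [k' [y' [jy' Uy']]] := jordan_sub_cyc jU.
have kk : k' = k by rewrite -(rank_cyc jy') -(eqmx_rank Uy') rkU rank_cyc.
subst k'; have [_ y'k y'top] := jy'; have [Uc cU] := andP Uy'.
have yy' : agree (Al l) y k \subset agree (Al l) y' k.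
  apply/subsetP => -[i j] /coord_eq_cyc Wij; apply/coord_eq_cyc.
  exact: coord_eqS cU ((is_P_sub HPW HPU).1 PUW i j Wij).
have US : (U <= S)%MS.
  have [_ UPU _] := HPU; have [_ _ PWmin] := HPW.
  exact: submx_trans UPU (submx_trans PUW (PWmin _ sS.1 WS)).
have [ssU|nssU] := classic (smallest_sync a U S).
  left; have gy' : generator S l k y'.
    split=> //; first by apply: contraNneq y'top => ->; rewrite mul0mx.
    exact: smallest_sync_sandwich ssU Uc (submx_trans cU US).
  have /eqP agreeE : agree (Al l) y k == agree (Al l) y' k by rewrite eqEcard yy' ymax.
  apply/andP; split=> //; apply/(is_P_sub HPU HPW) => i j Uij.
  by apply/coord_eq_cyc; rewrite agreeE; apply/coord_eq_cyc; exact: coord_eqS cU Uij.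
right; apply/eqmxP; apply: eqmx_trans (eqmxP Uy') (eqmxP (const_top_cyc jy' _)).
apply: (top_coord_const jy' yy') => c.
have uy' : (c *m krylov (Al l) y' k <= cyc (Al l) y' k)%MS by apply/cyc_memP; exists c.
have gz := generator_perturb JI gy US nssU (cyc_annihilated y'k uy')
  (submx_trans (cyc_sub_cyc y'k uy') cU).
have /eqP yzE : agree (Al l) y k == agree (Al l) (y + c *m krylov (Al l) y' k) k.
  by rewrite eqEcard (agree_add y'k uy' yy') ymax.
by rewrite -yzE subxx.
Qed.

Lemma join_irreducible_special S : join_irreducible a S ->
  exists W, special_jordan a W /\ smallest_sync a W S.
Proof.
move=> JI; have [l [k [y gy]]] := generator_exists JI.
have [k0 [l0 [y1 g1]] kmin] : exists2 k0, (exists l y, generator S l k0 y) &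
    forall k', (exists l y, generator S l k' y) -> (k0 <= k')%N.
  by apply: ex_minP; exists k, l, y.
have [m [y0 [g0 y0m]] ymax] : exists2 m,
    (exists y, generator S l0 k0 y /\ #|agree (Al l0) y k0| = m) &
    forall m', (exists y, generator S l0 k0 y /\ #|agree (Al l0) y k0| = m') -> (m' <= m)%N.
  apply: (ex_maxP (b := #|{: 'I_n * 'I_n}|)); first by exists #|agree (Al l0) y1 k0|, y1.
  by move=> _ [y' [_ <-]]; apply: max_card.
exists (cyc (Al l0) y0 k0); split; last by case: g0.
apply: optimal_generator_special JI g0 _ _.
  by move=> l' k' y' g'; apply: kmin; exists l', y'.
by move=> y' g'; rewrite y0m; apply: ymax; exists y'.
Qed.

End Network.

Unset Implicit Arguments.

(* Choosing such a W for each join-irreducible S gives an injection, since S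
   is recovered as the smallest synchrony subspace containing W. *)
Theorem mainTheorem10 (n v : nat) (a : 'M[nat]_n) (Hn : (0 < n)%N)
    (Hreg : forall i : 'I_n, (\sum_(j < n) a i j)%N = v) :
  (forall S : 'M[algC]_n, join_irreducible a S ->
     exists W : 'M[algC]_n, special_jordan a W /\ smallest_sync a W S) /\
  (exists f : 'M[algC]_n -> 'M[algC]_n,
     (forall S, join_irreducible a S -> special_jordan a (f S)) /\
     (forall S1 S2, join_irreducible a S1 -> join_irreducible a S2 ->
        (f S1 == f S2)%MS -> (S1 == S2)%MS)).
Proof.
have JI_special := join_irreducible_special Hn Hreg.
split=> //.
have choice S : exists W, join_irreducible a S ->
    special_jordan a W /\ smallest_sync a W S.
  have [JI|nJI] := classic (join_irreducible a S); last by exists S.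
  by have [W HW] := JI_special S JI; exists W.
pose f S := proj1_sig (constructive_indefinite_description _ (choice S)).
have fP S : join_irreducible a S -> special_jordan a (f S) /\ smallest_sync a (f S) S.
  exact: proj2_sig (constructive_indefinite_description _ (choice S)).
exists f; split=> [S /fP [] // | S1 S2 /fP [_ ss1] /fP [_ ss2] f12].
exact: smallest_sync_unique f12 ss1 ss2.
Qed.
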